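(* Let $Y$ be a set, $\Lambda$ an index set, and for $\ell\in\Lambda$ let $\rho_\ell:Y\to Y_\ell$ be surjective onto a finite set, with a probability density $\nu_\ell>0$ on $Y_\ell$ and an orthonormal basis $\mathcal{B}_\ell$ of $L^2(Y_\ell,\nu_\ell)$ (inner product $\langle f,g\rangle=\sum_y\nu_\ell(y)f(y)\overline{g(y)}$) containing the constant function $1$, $\mathcal{B}_\ell^*=\mathcal{B}_\ell\setminus\{1\}$. Let $(X,\mu)$ be a measure space with $\mu(X)<\infty$ and $F:X\to Y$ with all sets $\{\rho_\ell(F_x)=y\}$ measurable. Let $\mathcal{L}^*\subset\Lambda$ be finite and let $\Delta$ be the smallest non-negative real number such that $\sum_{\ell\in\mathcal{L}^*}\sum_{\varphi\in\mathcal{B}_\ell^*}|\int_X\alpha(x)\varphi(\rho_\ell(F_x))d\mu(x)|^2\leq\Delta\int_X|\alpha|^2d\mu$ for all square-integrable $\alpha:X\to\mathbf{C}$. Then for any subsets $\Omega_\ell\subset Y_\ell$ ($\ell\in\mathcal{L}^*$), $$\int_X\big(P(x,\mathcal{L})-P(\mathcal{L})\big)^2\,d\mu(x)\leq\Delta\,Q(\mathcal{L}),$$ where $P(x,\mathcal{L})=|\{\ell\in\mathcal{L}^*\mid \rho_\ell(F_x)\in\Omega_\ell\}|$, $P(\mathcal{L})=\sum_{\ell\in\mathcal{L}^*}\nu_\ell(\Omega_\ell)$ and $Q(\mathcal{L})=\sum_{\ell\in\mathcal{L}^*}\nu_\ell(\Omega_\ell)(1-\nu_\ell(\Omega_\ell))$,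 with $\nu_\ell(\Omega_\ell)=\sum_{y\in\Omega_\ell}\nu_\ell(y)$. *)

From HB Require Import structures.
From mathcomp Require Import all_boot all_order all_algebra.
From mathcomp Require Import all_classical all_reals all_analysis.
From mathcomp Require Import complex.
Set Implicit Arguments. Unset Strict Implicit. Unset Printing Implicit Defensive.
Import Order.TTheory GRing.Theory Num.Theory.
Local Open Scope ring_scope.

Section LargeSieveDefs.
Variable R : realType.
Local Notation C := (complex R).

Definition normsq (z : C) : R := complex.Re z ^+ 2 + complex.Im z ^+ 2.

Definition ipL2 (Y : finType) (nu : Y -> R) (f g : Y -> C) : C :=
  \sum_(y : Y) (nu y)%:C%C * f y * conjc (g y).

Definition orthonormal_basis (Y : finType) (nu : Y -> R)
    (B : seq {ffun Y -> C}) : Prop :=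
  (forall i j, (i < size B)%N -> (j < size B)%N ->
     ipL2 nu (nth 0 B i) (nth 0 B j) = (i == j)%:R) /\
  (forall f : Y -> C, exists c : nat -> C,
     forall y, f y = \sum_(i < size B) c i * nth 0 B i y).

Definition unit_fun (Y : finType) : {ffun Y -> C} := [ffun => 1].

Definition Bstar (Y : finType) (B : seq {ffun Y -> C}) : seq {ffun Y -> C} :=
  [seq b <- B | b != unit_fun Y].

Variables (d : measure_display) (X : measurableType d)
  (mu : {measure set X -> \bar R}).

Definition cint (f : X -> C) : C :=
  Complex (Rintegral mu setT (fun x => complex.Re (f x)))
          (Rintegral mu setT (fun x => complex.Im (f x))).

Definition sq_integrable (alpha : X -> C) : Prop :=
  [/\ measurable_fun setT (fun x => complex.Re (alpha x)),
      measurable_fun setT (fun x => complex.Im (alpha x)) &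
      mu.-integrable setT (fun x => (normsq (alpha x))%:E)].

End LargeSieveDefs.

(* Expanding the centred indicator [1_{Omega_l} - nu_l(Omega_l)] in the basis
   [B_l^*] writes [alpha := P(., L) - P(L)] as [sum_(l, phi) c_(l,phi) phi(rho_l(F x))],
   and Parseval gives [sum |c_(l,phi)|^2 = Q(L)].  Hence
   [int alpha^2 = sum c_(l,phi) int alpha phi(rho_l o F)], so for every [t > 0]
   [2 t int alpha^2 <= t^2 Q(L) + sum |int alpha phi(rho_l o F)|^2
                    <= t^2 Q(L) + Delta int alpha^2];
   taking [t = Delta] (or letting [t -> 0] when [Delta = 0]) gives the bound. *)

From HB Require Import structures.
From mathcomp Require Import all_boot all_order all_algebra.
From mathcomp Require Import all_classical all_reals all_analysis.
From mathcomp Require Import complex.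
From mathcomp Require Import measurable_realfun.
From mathcomp Require Import ring lra.
Import Order.TTheory GRing.Theory Num.Theory.
Local Open Scope ring_scope.
Local Open Scope complex_scope.

Section ComplexFacts.
Local Set Implicit Arguments.
Local Unset Strict Implicit.
Variable R : realType.
Implicit Types (a t : R) (x y : R[i]).

Lemma ReM x y : complex.Re (x * y) =
  complex.Re x * complex.Re y - complex.Im x * complex.Im y.
Proof. by case: x => ? ?; case: y. Qed.

Lemma ImM x y : complex.Im (x * y) =
  complex.Re x * complex.Im y + complex.Im x * complex.Re y.
Proof. by case: x => ? ?; case: y. Qed.

Lemma Re_sum (I : Type) (s : seq I) (f : I -> R[i]) :
  complex.Re (\sum_(i <- s) f i) = \sum_(i <- s) complex.Re (f i).
Proof. exact: (raddf_sum (@complex.Re R : Rcomplex R -> R)). Qed.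

Lemma Im_sum (I : Type) (s : seq I) (f : I -> R[i]) :
  complex.Im (\sum_(i <- s) f i) = \sum_(i <- s) complex.Im (f i).
Proof. exact: (raddf_sum (@complex.Im R : Rcomplex R -> R)). Qed.

Lemma normsq_realc a : normsq a%:C = a ^+ 2.
Proof. by rewrite /normsq expr0n addr0. Qed.

Lemma normsqE x : (normsq x)%:C = x * x^*.
Proof.
case: x => a b; apply/eqP; rewrite eq_complex /normsq /=.
by apply/andP; split; apply/eqP; ring.
Qed.

Lemma Re_mul_le_normsq t x y :
  2 * t * complex.Re (x * y) <= t ^+ 2 * normsq x + normsq y.
Proof.
case: x => a b; case: y => e f; rewrite /normsq /= -subr_ge0.
have -> : t ^+ 2 * (a ^+ 2 + b ^+ 2) + (e ^+ 2 + f ^+ 2) - 2 * t * (a * e - b * f)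
  = (t * a - e) ^+ 2 + (t * b + f) ^+ 2 by ring.
by rewrite addr_ge0 ?sqr_ge0.
Qed.

End ComplexFacts.

Lemma natr_count (R : pzSemiRingType) (T : Type) (p : pred T) (s : seq T) :
  (count p s)%:R = \sum_(x <- s) (p x)%:R :> R.
Proof.
by rewrite -sum1_count natr_sum big_mkcond; apply: eq_bigr => x _; case: ifP.
Qed.

Lemma le_of_quadratic_bound (R : realFieldType) (A Q D : R) : 0 <= D ->
  (forall t, 0 < t -> 2 * t * A <= t ^+ 2 * Q + D * A) -> A <= D * Q.
Proof.
(* Take [t = D]; when [D = 0], [t = A / Q] rules out [A > 0]. *)
move=> D_ge0 quad; have [D_gt0|D_le0] := ltrP 0 D.
  by have := quad D D_gt0; nra.
have D0 : D = 0 by apply/le_anti/andP.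
rewrite D0 mul0r leNgt; apply/negP => A_gt0.
have Q_gt0 : 0 < Q by have := quad 1 ltr01; rewrite D0; nra.
have := quad (A / Q) (divr_gt0 A_gt0 Q_gt0).
have : A / Q * Q = A by rewrite divfK ?gt_eqF.
have : 0 < A / Q by exact: divr_gt0.
rewrite D0; nra.
Qed.

Section OrthonormalBasis.
Local Set Implicit Arguments.
Local Unset Strict Implicit.
Variables (R : realType) (Y : finType) (nu : Y -> R) (B : seq {ffun Y -> R[i]}).
Hypothesis onbB : orthonormal_basis nu B.

Lemma ipL2_suml (I : Type) (s : seq I) (a : I -> R[i]) (h : I -> Y -> R[i])
    (g : Y -> R[i]) :
  ipL2 nu (fun y => \sum_(i <- s) a i * h i y) g =
  \sum_(i <- s) a i * ipL2 nu (h i) g.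
Proof.
rewrite /ipL2; under eq_bigr => y _ do rewrite mulr_sumr mulr_suml.
rewrite exchange_big; apply: eq_bigr => i _.
by rewrite mulr_sumr; apply: eq_bigr => y _; ring.
Qed.

Lemma ipL2_conj (f g : Y -> R[i]) : ipL2 nu g f = (ipL2 nu f g)^*.
Proof.
rewrite /ipL2 rmorph_sum; apply: eq_bigr => y _.
by rewrite !rmorphM /= conjcK oppr0 complexr0; ring.
Qed.

Lemma orthonormal_basis_uniq : uniq B.
Proof.
case: onbB => onB _; apply/(uniqP 0) => i j iB jB eq_ij.
have := onB i j iB jB; rewrite eq_ij (onB j j jB jB) eqxx.
by case: eqP => // _ /(congr1 (@complex.Re R)) /eqP; rewrite oner_eq0.
Qed.

Lemma ipL2_coord (g : Y -> R[i]) (c : nat -> R[i]) j :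
  (forall y, g y = \sum_(i < size B) c i * nth 0 B i y) ->
  (j < size B)%N -> ipL2 nu g (nth 0 B j) = c j.
Proof.
case: onbB => onB _ gE jB; rewrite (funext gE).
rewrite (ipL2_suml _ (fun i : 'I_(size B) => c i) (fun i => nth 0 B i)).
rewrite (bigD1 (Ordinal jB)) //= big1 => [|i].
  by rewrite onB // eqxx mulr1 addr0.
by rewrite -val_eqE /= => /negbTE ne_ij; rewrite onB // ne_ij mulr0.
Qed.

Lemma onb_coordP (g : Y -> R[i]) :
  exists2 c : nat -> R[i], forall y, g y = \sum_(i < size B) c i * nth 0 B i y
  & forall j, (j < size B)%N -> ipL2 nu g (nth 0 B j) = c j.
Proof.
case: onbB => _ /(_ g) [c gE]; exists c => // j; exact: ipL2_coord.
Qed.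

Lemma onb_expansion (g : Y -> R[i]) y :
  g y = \sum_(b <- B) ipL2 nu g b * b y.
Proof.
have [c gE cE] := onb_coordP g.
by rewrite gE (big_nth 0) big_mkord; apply: eq_bigr => i _; rewrite cE.
Qed.

Lemma parseval (g : Y -> R[i]) :
  ipL2 nu g g = (\sum_(b <- B) normsq (ipL2 nu g b))%:C.
Proof.
have [c gE cE] := onb_coordP g.
rewrite {1}(funext gE) ipL2_suml rmorph_sum (big_nth 0) big_mkord.
by apply: eq_bigr => i _; rewrite ipL2_conj !cE // -normsqE.
Qed.

Hypothesis oneB : unit_fun R Y \in B.

Lemma big_Bstar (V : nmodType) (G : {ffun Y -> R[i]} -> V) :
  \sum_(b <- B) G b = G (unit_fun R Y) + \sum_(b <- Bstar B) G b.
Proof.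
by rewrite (bigD1_seq _ oneB orthonormal_basis_uniq) /Bstar big_filter.
Qed.

Lemma onb_expansion_Bstar (g : Y -> R[i]) y :
  g y - ipL2 nu g (unit_fun R Y) = \sum_(b <- Bstar B) ipL2 nu g b * b y.
Proof. by rewrite onb_expansion big_Bstar ffunE mulr1 addrAC subrr add0r. Qed.

Lemma parseval_Bstar (g : Y -> R[i]) :
  (\sum_(b <- Bstar B) normsq (ipL2 nu g b))%:C =
  ipL2 nu g g - (normsq (ipL2 nu g (unit_fun R Y)))%:C.
Proof. by rewrite parseval big_Bstar rmorphD addrAC subrr add0r. Qed.

Variable A : {set Y}.
Let nuA := \sum_(y in A) nu y.

Lemma ipL2_indicator_one :
  ipL2 nu (fun y => (y \in A)%:R) (unit_fun R Y) = nuA%:C.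
Proof.
rewrite /ipL2 /nuA [in RHS]big_mkcond rmorph_sum; apply: eq_bigr => y _.
by rewrite ffunE conjc1 mulr1; case: (y \in A); rewrite ?mulr1 ?mulr0.
Qed.

Lemma ipL2_indicator_self :
  ipL2 nu (fun y => (y \in A)%:R) (fun y => (y \in A)%:R) = nuA%:C.
Proof.
rewrite /ipL2 /nuA [in RHS]big_mkcond rmorph_sum; apply: eq_bigr => y _.
by case: (y \in A); rewrite ?conjc1 ?conjc0 ?mulr1 ?mulr0.
Qed.

Lemma indicator_expansion_Bstar y :
  (y \in A)%:R - nuA%:C =
  \sum_(b <- Bstar B) ipL2 nu (fun y => (y \in A)%:R) b * b y.
Proof. by rewrite -onb_expansion_Bstar ipL2_indicator_one. Qed.

Lemma indicator_parseval_Bstar :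
  \sum_(b <- Bstar B) normsq (ipL2 nu (fun y => (y \in A)%:R) b) =
  nuA * (1 - nuA).
Proof.
apply: (@complexI R); rewrite parseval_Bstar ipL2_indicator_self.
by rewrite ipL2_indicator_one normsq_realc -rmorphB mulrBr mulr1 expr2.
Qed.

End OrthonormalBasis.

Section BoundedMeasurable.
Local Set Implicit Arguments.
Local Unset Strict Implicit.
Local Open Scope classical_set_scope.
Variables (R : realType) (d : measure_display) (X : measurableType d)
  (mu : {measure set X -> \bar R}).
Hypothesis mu_fin : (mu setT < +oo)%E.
Implicit Types (f g : X -> R).

(* Every function in the argument factors through finitely many [rho_l o F],
   so boundedness stands in for square integrability. *)
Definition bounded_measurable f :=
  measurable_fun setT f /\ exists M, forall x, `|f x| <= M.

Lemma bounded_measurable_cst (r : R) : bounded_measurable (fun=> r).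
Proof. by split; [exact: measurable_cst | exists `|r|]. Qed.

Lemma bounded_measurableD f g : bounded_measurable f -> bounded_measurable g ->
  bounded_measurable (f \+ g).
Proof.
move=> [mf [M fM]] [mg [N gN]]; split; first exact: measurable_funD.
by exists (M + N) => x; rewrite (le_trans (ler_normD _ _)) ?lerD.
Qed.

Lemma bounded_measurableB f g : bounded_measurable f -> bounded_measurable g ->
  bounded_measurable (f \- g).
Proof.
move=> [mf [M fM]] [mg [N gN]]; split; first exact: measurable_funB.
by exists (M + N) => x; rewrite (le_trans (ler_normB _ _)) ?lerD.
Qed.

Lemma bounded_measurableM f g : bounded_measurable f -> bounded_measurable g ->
  bounded_measurable (f \* g).
Proof.
move=> [mf [M fM]] [mg [N gN]]; split; first exact: measurable_funM.
by exists (M * N) => x; rewrite normrM ler_pM.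
Qed.

Lemma bounded_measurable_sum (I : Type) (s : seq I) (f : I -> X -> R) :
  (forall i, bounded_measurable (f i)) ->
  bounded_measurable (fun x => \sum_(i <- s) f i x).
Proof.
move=> bmf; elim: s => [|i s IHs].
  by under eq_fun do rewrite big_nil; exact: bounded_measurable_cst.
by under eq_fun do rewrite big_cons; exact: bounded_measurableD.
Qed.

Lemma bounded_measurable_comp_fin (T : finType) (k : X -> T) (g : T -> R) :
  (forall t, measurable [set x | k x = t]) -> bounded_measurable (g \o k).
Proof.
move=> mk; split; last first.
  by exists (\sum_t `|g t|) => x; rewrite (bigD1 (k x)) //= lerDl sumr_ge0.
have -> : g \o k = fun x => \sum_t g t * \1_[set x | k x = t] x.
  apply: funext => x; rewrite (bigD1 (k x)) //= indicE mem_set // mulr1 big1 ?addr0 //.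
  by move=> t /eqP kxt; rewrite indicE memNset ?mulr0 // => /esym.
apply: measurable_sum => t; apply: measurable_funM; first exact: measurable_cst.
exact: measurable_indic.
Qed.

Lemma bounded_measurable_integrable f :
  bounded_measurable f -> mu.-integrable setT (EFin \o f).
Proof.
move=> [mf [M fM]]; apply: measurable_bounded_integrable => //.
exists M; split; rewrite ?num_real // => N MN x _.
exact: le_trans (fM x) (ltW MN).
Qed.

Lemma integral_bounded_measurable f : bounded_measurable f ->
  (\int[mu]_x (f x)%:E = (Rintegral mu setT f)%:E)%E.
Proof.
by move=> /bounded_measurable_integrable/(integrable_fin_num measurableT)/fineK.
Qed.

Lemma Rintegral_sum (I : Type) (s : seq I) (f : I -> X -> R) :
  (forall i, bounded_measurable (f i)) ->
  Rintegral mu setT (fun x => \sum_(i <- s) f i x) =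
  \sum_(i <- s) Rintegral mu setT (f i).
Proof.
move=> bmf; elim: s => [|i s IHs].
  by under eq_fun do rewrite big_nil; rewrite big_nil /Rintegral integral0.
under eq_fun do rewrite big_cons.
rewrite big_cons RintegralD ?IHs //; apply: bounded_measurable_integrable => //.
exact: bounded_measurable_sum.
Qed.

End BoundedMeasurable.

Section ComplexIntegral.
Local Set Implicit Arguments.
Local Unset Strict Implicit.
Local Open Scope classical_set_scope.
Variables (R : realType) (d : measure_display) (X : measurableType d)
  (mu : {measure set X -> \bar R}).
Hypothesis mu_fin : (mu setT < +oo)%E.
Implicit Types (f g : X -> R[i]).

Definition cbounded_measurable f :=
  bounded_measurable (fun x => complex.Re (f x)) /\
  bounded_measurable (fun x => complex.Im (f x)).

Lemma cbounded_measurable_cst (a : R[i]) : cbounded_measurable (fun=> a).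
Proof. by split; apply: bounded_measurable_cst. Qed.

Lemma cbounded_measurable_real (h : X -> R) :
  bounded_measurable h -> cbounded_measurable (fun x => (h x)%:C).
Proof. by split=> //; apply: bounded_measurable_cst. Qed.

Lemma cbounded_measurableM f g :
  cbounded_measurable f -> cbounded_measurable g -> cbounded_measurable (f \* g).
Proof.
move=> [ref imf] [reg img]; split.
  under eq_fun do rewrite /= ReM.
  by apply: bounded_measurableB; apply: bounded_measurableM.
under eq_fun do rewrite /= ImM.
by apply: bounded_measurableD; apply: bounded_measurableM.
Qed.

Lemma cbounded_measurable_sum (I : Type) (s : seq I) (h : I -> X -> R[i]) :
  (forall i, cbounded_measurable (h i)) ->
  cbounded_measurable (fun x => \sum_(i <- s) h i x).
Proof.
move=> bmh; split.
  under eq_fun do rewrite Re_sum.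
  by apply: bounded_measurable_sum => i; case: (bmh i).
under eq_fun do rewrite Im_sum.
by apply: bounded_measurable_sum => i; case: (bmh i).
Qed.

Lemma cbounded_measurable_comp_fin (T : finType) (k : X -> T) (h : T -> R[i]) :
  (forall t, measurable [set x | k x = t]) -> cbounded_measurable (h \o k).
Proof.
move=> mk; split.
  exact: (bounded_measurable_comp_fin (fun t => complex.Re (h t)) mk).
exact: (bounded_measurable_comp_fin (fun t => complex.Im (h t)) mk).
Qed.

Lemma cint_real (h : X -> R) :
  cint mu (fun x => (h x)%:C) = (Rintegral mu setT h)%:C.
Proof. by rewrite /cint /= /Rintegral integral0. Qed.

Lemma cint_sum (I : Type) (s : seq I) (h : I -> X -> R[i]) :
  (forall i, cbounded_measurable (h i)) ->
  cint mu (fun x => \sum_(i <- s) h i x) = \sum_(i <- s) cint mu (h i).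
Proof.
move=> bmh; apply/eqP; rewrite eq_complex Re_sum Im_sum /=.
rewrite -!(Rintegral_sum mu_fin) => [|i|i]; try by case: (bmh i).
by apply/andP; split; apply/eqP/eq_Rintegral => x _; rewrite ?Re_sum ?Im_sum.
Qed.

Lemma cintZl (a : R[i]) f : cbounded_measurable f ->
  cint mu (fun x => a * f x) = a * cint mu f.
Proof.
move=> [ref imf].
have intZ r h : bounded_measurable h ->
    mu.-integrable setT (EFin \o (fun x => r * h x)).
  move=> bh; apply: (bounded_measurable_integrable mu_fin).
  by apply: bounded_measurableM => //; exact: bounded_measurable_cst.
case: a => a b; apply/eqP; rewrite eq_complex /cint /=.
rewrite -!RintegralZl -?RintegralB -?RintegralD ?intZ //;
  try exact: bounded_measurable_integrable.
by apply/andP; split; apply/eqP/eq_Rintegral => x _; rewrite ?ReM ?ImM.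
Qed.

Lemma cbounded_measurable_sq_integrable f :
  cbounded_measurable f -> sq_integrable mu f.
Proof.
move=> [[mre bre] [mim bim]]; split=> //.
apply: bounded_measurable_integrable => //; rewrite /normsq.
by apply: bounded_measurableD; apply: bounded_measurableM.
Qed.

Lemma large_sieve_duality (K : Type) (s : seq K) (c : K -> R[i])
    (phi : K -> X -> R[i]) (alpha : X -> R) (D : R) :
  0 <= D -> bounded_measurable alpha ->
  (forall k, cbounded_measurable (phi k)) ->
  (forall x, (alpha x)%:C = \sum_(k <- s) c k * phi k x) ->
  \sum_(k <- s) normsq (cint mu (fun x => (alpha x)%:C * phi k x)) <=
    D * Rintegral mu setT (fun x => alpha x ^+ 2) ->
  Rintegral mu setT (fun x => alpha x ^+ 2) <= D * \sum_(k <- s) normsq (c k).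
Proof.
move=> D_ge0 bma bmphi alphaE dual.
set A := Rintegral _ _ _ in dual *.
set I := fun k => cint mu (fun x => (alpha x)%:C * phi k x) in dual *.
have AE : A%:C = \sum_(k <- s) c k * I k.
  rewrite -cint_real.
  transitivity (cint mu (fun x => \sum_(k <- s) c k * ((alpha x)%:C * phi k x))).
    congr cint; apply: funext => x.
    rewrite expr2 rmorphM; under eq_bigr do rewrite mulrCA.
    by rewrite -mulr_sumr -alphaE.
  have bmI k : cbounded_measurable (fun x => (alpha x)%:C * phi k x).
    exact: cbounded_measurableM (cbounded_measurable_real bma) (bmphi k).
  rewrite cint_sum => [|k]; last exact: cbounded_measurableM (cbounded_measurable_cst _) (bmI k).
  by apply: eq_bigr => k _; rewrite cintZl.
apply: le_of_quadratic_bound => // t t_gt0.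
have -> : 2 * t * A = \sum_(k <- s) 2 * t * complex.Re (c k * I k).
  by rewrite -mulr_sumr -Re_sum -AE.
apply: le_trans (lerD (lexx _) dual); rewrite mulr_sumr -big_split.
by apply: ler_sum => k _; exact: Re_mul_le_normsq.
Qed.

End ComplexIntegral.

Section CentredCount.
Variables (R : realType) (Y : Type) (Lambda : eqType) (Yl : Lambda -> finType)
  (rho : forall l, Y -> Yl l) (nu : forall l, Yl l -> R)
  (B : forall l, seq {ffun Yl l -> R[i]}).
Hypotheses (B_onb : forall l, orthonormal_basis (nu l) (B l))
  (B_one : forall l, unit_fun R (Yl l) \in B l).
Variables (Lstar : seq Lambda) (Omega : forall l, {set Yl l}).
Let nuO l := \sum_(y in Omega l) nu l y.
Local Set Implicit Arguments.
Local Unset Strict Implicit.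

Definition tagged_Bstar : seq {l : Lambda & {ffun Yl l -> R[i]}} :=
  [seq Tagged (fun l => {ffun Yl l -> R[i]}) b | l <- Lstar, b <- Bstar (B l)].

Definition indicator_coef (k : {l : Lambda & {ffun Yl l -> R[i]}}) : R[i] :=
  ipL2 (nu (tag k)) (fun y => (y \in Omega (tag k))%:R) (tagged k).

Lemma centred_count_expansion (z : Y) :
  ((count (fun l => rho l z \in Omega l) Lstar)%:R - \sum_(l <- Lstar) nuO l)%:C =
  \sum_(k <- tagged_Bstar) indicator_coef k * tagged k (rho (tag k) z).
Proof.
rewrite natr_count -sumrB rmorph_sum big_allpairs_dep; apply: eq_bigr => l _.
rewrite /indicator_coef /= -(indicator_expansion_Bstar (B_onb l) (B_one l)).
by rewrite rmorphB /= rmorph_nat.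
Qed.

Lemma sum_normsq_indicator_coef :
  \sum_(k <- tagged_Bstar) normsq (indicator_coef k) =
  \sum_(l <- Lstar) nuO l * (1 - nuO l).
Proof.
rewrite big_allpairs_dep; apply: eq_bigr => l _.
by rewrite /indicator_coef /= (indicator_parseval_Bstar (B_onb l) (B_one l)).
Qed.

End CentredCount.

Theorem proposition3p1
  (R : realType) (Y : Type) (Lambda : eqType) (Yl : Lambda -> finType)
  (rho : forall l, Y -> Yl l)
  (rho_surj : forall l (z : Yl l), exists y, rho l y = z)
  (nu : forall l, Yl l -> R)
  (nu_pos : forall l (y : Yl l), 0 < nu l y)
  (nu_prob : forall l, \sum_(y : Yl l) nu l y = 1)
  (B : forall l, seq {ffun Yl l -> complex R})
  (B_onb : forall l, orthonormal_basis (nu l) (B l))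
  (B_one : forall l, unit_fun R (Yl l) \in B l)
  (d : measure_display) (X : measurableType d)
  (mu : {measure set X -> \bar R})
  (mu_fin : (mu setT < +oo)%E)
  (F : X -> Y)
  (F_meas : forall l (y : Yl l), measurable [set x | rho l (F x) = y])
  (Lstar : seq Lambda) (Lstar_uniq : uniq Lstar)
  (Delta : R)
  (Delta_ok : 0 <= Delta /\
     forall alpha : X -> complex R, sq_integrable mu alpha ->
       ((\sum_(l <- Lstar) \sum_(phi <- Bstar (B l))
           normsq (cint mu (fun x => alpha x * phi (rho l (F x)))))%:E
        <= Delta%:E * \int[mu]_x (normsq (alpha x))%:E)%E)
  (Delta_min : forall D : R, 0 <= D ->
     (forall alpha : X -> complex R, sq_integrable mu alpha ->
       ((\sum_(l <- Lstar) \sum_(phi <- Bstar (B l))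
           normsq (cint mu (fun x => alpha x * phi (rho l (F x)))))%:E
        <= D%:E * \int[mu]_x (normsq (alpha x))%:E)%E) ->
     Delta <= D)
  (Omega : forall l, {set Yl l}) :
  let nuO := fun l => \sum_(y in Omega l) nu l y in
  let Px := fun x => (count (fun l => rho l (F x) \in Omega l) Lstar)%:R : R in
  let P := \sum_(l <- Lstar) nuO l in
  let Q := \sum_(l <- Lstar) nuO l * (1 - nuO l) in
  (\int[mu]_x ((Px x - P) ^+ 2)%:E <= (Delta * Q)%:E)%E.
Proof.
(* Only the large sieve inequality for [Delta] is used, not its minimality. *)
pose nuO l := \sum_(y in Omega l) nu l y.
pose Px x := (count (fun l => rho l (F x) \in Omega l) Lstar)%:R : R.
pose P := \sum_(l <- Lstar) nuO l.
pose Q := \sum_(l <- Lstar) nuO l * (1 - nuO l).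
change (\int[mu]_x ((Px x - P) ^+ 2)%:E <= (Delta * Q)%:E)%E.
case: Delta_ok => Delta_ge0 Delta_large_sieve.
pose phi (k : {l : Lambda & {ffun Yl l -> R[i]}}) x := tagged k (rho (tag k) (F x)).
have bm_phi k : cbounded_measurable (phi k).
  exact: cbounded_measurable_comp_fin (F_meas (tag k)).
have alphaE x : (Px x - P)%:C =
    \sum_(k <- tagged_Bstar B Lstar) indicator_coef nu Omega k * phi k x.
  exact (centred_count_expansion rho B_onb B_one Lstar Omega (F x)).
have [bm_alpha _] : cbounded_measurable (fun x => (Px x - P)%:C).
  rewrite (funext alphaE); apply: cbounded_measurable_sum => k.
  by apply: cbounded_measurableM; [exact: cbounded_measurable_cst | exact: bm_phi].
have int_alpha2 : (\int[mu]_x ((Px x - P) ^+ 2)%:E =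
    (Rintegral mu setT (fun x => (Px x - P) ^+ 2))%:E)%E.
  by apply: integral_bounded_measurable => //; exact: bounded_measurableM.
have Q_E : Q = \sum_(k <- tagged_Bstar B Lstar) normsq (indicator_coef nu Omega k)
  := esym (sum_normsq_indicator_coef B_onb B_one Lstar Omega).
rewrite int_alpha2 lee_fin Q_E.
apply: large_sieve_duality alphaE _ => //.
rewrite -lee_fin EFinM -int_alpha2 big_allpairs_dep.
under eq_integral do rewrite -normsq_realc.
apply: Delta_large_sieve.
exact/(cbounded_measurable_sq_integrable mu_fin)/cbounded_measurable_real.
Qed.
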